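(* Let $a\geq 3$ and $m\geq 2a^2-a+2$ be integers, and suppose $[C(m,a)]$ is colored with red and blue so that there is no monochromatic solution of $L(m,a)$ in $[C(m,a)]$, with both $a-2$ and $a-1$ red. Then $1$ is red.
   Context: For integers $m\geq 3$, $a\geq 1$, $L(m,a)$ denotes the equation $x_1+x_2+\cdots+x_{m-1}=a x_m$. For a positive integer $n$, $[n]=\{1,\dots,n\}$. A solution of $L(m,a)$ in $[n]$ is an $m$-tuple $(x_1,\dots,x_m)\in[n]^m$ (entries not necessarily distinct) satisfying the equation; given a 2-coloring of $[n]$, it is monochromatic if all $x_i$ have the same color. $C(m,a)$ denotes $\left\lceil \frac{m-1}{a}\left\lceil \frac{m-1}{a}\right\rceil\right\rceil$. *)

From mathcomp Require Import all_boot.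
Set Implicit Arguments. Unset Strict Implicit. Unset Printing Implicit Defensive.

Definition ceil_div (p q : nat) : nat := (p + q - 1) %/ q.

(* C(m,a) = ceil( (m-1)/a * ceil((m-1)/a) ) = ceil( (m-1)*ceil((m-1)/a) / a ) *)
Definition Cma (m a : nat) : nat := ceil_div ((m - 1) * ceil_div (m - 1) a) a.

(* x : 'I_m -> nat is a solution of L(m,a) in [n]:
   x_1 + ... + x_{m-1} = a x_m, all entries in {1..n}.
   Index i : 'I_m corresponds to x_{i+1}; the last index ord_max-like is m-1. *)
Definition is_solution (m a n : nat) (x : 'I_m -> nat) : Prop :=
  (forall i, 1 <= x i <= n) /\
  \sum_(i < m | i.+1 < m) x i = a * (\sum_(i < m | i.+1 == m) x i).

(* coloring c : nat -> bool (true = red, false = blue); monochromatic *)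
Definition monochromatic (m : nat) (c : nat -> bool) (x : 'I_m -> nat) : Prop :=
  forall i j : 'I_m, c (x i) = c (x j).

From mathcomp Require Import all_boot zify.

(* Write m = n + 1, so L(m,a) reads x_1 + ... + x_n = a x_{n+1},
   and C := C(m,a).  Only "two-valued" solutions are used: p copies of u,
   n - p copies of v and right-hand side t, i.e. p u + (n - p) v = a t.
   1. If a-2 and a-1 are both red, every t with n(a-2) <= a t <= n(a-1) is
      blue: taking p = a t - n(a-2) copies of a-1 and the rest a-2 gives a red
      left-hand side equal to a t.
   2. With B = a(a-1) and d = (n-1) div B, the number t = n + 1 - a - a d
      satisfies n(a-2) <= a t and a(t + d) <= n(a-1) as soon as
      n >= 2a^2 - a + 1; hence t and t + d are blue.
   3. (a-1) t + (n-a+1) * 1 = a (t + d), so if 1 were blue this would be a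
      blue solution. *)

Lemma ceil_divP p q : 0 < q -> p <= ceil_div p q * q.
Proof. by move=> q0; have := ltn_ceil (p + q - 1) q0; rewrite /ceil_div; lia. Qed.

Lemma leq_ceil_div y p q : 0 < q -> y * q <= p -> y <= ceil_div p q.
Proof. by move=> q0 le_yq; rewrite /ceil_div leq_divRL //; lia. Qed.

(* Every t with a t <= n (a-1) lies in [C(n+1, a)], provided n is large
   enough that ceil(n/a) >= a - 1. *)
Lemma Cma_upper n a t :
  0 < a -> (a - 2) * a < n -> a * t <= n * (a - 1) -> t <= Cma n.+1 a.
Proof.
move=> a0 big_n le_at; rewrite /Cma subn1 /=.
set e := ceil_div n a.
have e_ge : a - 1 <= e.
  have := ceil_divP n a a0; rewrite -/e => le_ne.
  have : (a - 2) * a < e * a by apply: leq_trans le_ne.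
  rewrite ltn_mul2r; lia.
apply: leq_ceil_div => //; rewrite mulnC.
by apply: leq_trans le_at _; rewrite leq_mul2l e_ge orbT.
Qed.

(* The key estimate behind step 2: for B = a(a-1) and B d < n, a^2 d + a^2
   is at most 2n + a, which is n(a-2) <= a t in disguise for t = n+1-a-ad. *)
Lemma quotient_estimate a d n : 3 <= a -> 2 * (a * a) - a + 1 <= n ->
  a * (a - 1) * d < n -> a * (a * d) + a * a <= 2 * n + a.
Proof.
move=> ha hn hd.
set B := a * (a - 1) in hd.
have eX : a * a = B + a by rewrite /B mulnBr muln1; lia.
have eY : a * (a * d) = B * d + a * d by rewrite mulnA eX mulnDl.
have hB : 2 * a <= B by rewrite /B mulnC leq_mul2l; lia.
rewrite eY eX; case: (leqP d 1) => hd1.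
- have : a * d <= a by rewrite -{2}[a]muln1 leq_mul2l hd1 orbT.
  have : B * d <= B by rewrite -{2}[B]muln1 leq_mul2l hd1 orbT.
  lia.
- have : a * d <= B * (d - 1).
    apply: leq_trans (_ : a * (2 * (d - 1)) <= _).
      by rewrite leq_mul2l; lia.
    by rewrite mulnA leq_mul2r mulnC hB orbT.
  have : B <= B * d by rewrite leq_pmulr; lia.
  rewrite mulnBr muln1; lia.
Qed.

Lemma window_pair a n : 3 <= a -> 2 * (a * a) - a + 1 <= n ->
  exists d t, [/\ t + a * d + a = n.+1, n * (a - 2) <= a * t
                & a * (t + d) <= n * (a - 1)].
Proof.
move=> ha hn; set B := a * (a - 1).
have B0 : 0 < B by rewrite muln_gt0; lia.
set d := (n - 1) %/ B.
have lo : B * d < n by rewrite mulnC; have := leq_divM (n - 1) B; lia.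
have hi : n <= B * d + B by rewrite mulnC; have := ltn_ceil (n - 1) B0; lia.
have est := quotient_estimate _ _ _ ha hn lo.
have fits : a * d + a <= n.+1.
  have : 3 * (a * d + a) <= a * (a * d + a) by rewrite leq_mul2r; lia.
  rewrite mulnDr; lia.
exists d, (n.+1 - (a * d + a)); set t := _ - _.
have et : t + a * d + a = n.+1 by rewrite /t; lia.
have eat : a * t + a * (a * d) + a * a = a * n + a by rewrite -!mulnDr et mulnSr.
split => //.
- have : n * (a - 2) + 2 * n = a * n.
    by rewrite [2 * n]mulnC -mulnDr mulnC; congr (_ * _); lia.
  lia.
- have eX : a * a = B + a by rewrite /B mulnBr muln1; lia.
  have eY : a * (a * d) = B * d + a * d by rewrite mulnA eX mulnDl.
  have : n * (a - 1) + n = a * n.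
    by rewrite -{2}[n]muln1 -mulnDr mulnC; congr (_ * _); lia.
  rewrite mulnDr; lia.
Qed.

Lemma sum_two_values n p u v : p <= n ->
  \sum_(i < n) (if i < p then u else v) = p * u + (n - p) * v.
Proof.
move=> le_pn.
rewrite -(big_mkord xpredT (fun i => if i < p then u else v)).
rewrite (big_cat_nat (leq0n p) le_pn) /=.
rewrite (@eq_big_nat _ _ _ 0 p _ (fun=> u)); last by move=> i /andP[_ ->].
rewrite (@eq_big_nat _ _ _ p n _ (fun=> v)); last by move=> i /andP[/leq_gtF ->].
by rewrite !sum_nat_const_nat subn0.
Qed.

Lemma weighted_sum_succ n p b : p <= n -> p * b.+1 + (n - p) * b = p + n * b.
Proof. by move=> le_pn; rewrite mulnS -addnA -mulnDl subnKC. Qed.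

Definition two_valued (n p u v t : nat) (i : 'I_n.+1) : nat :=
  if val i == n then t else if i < p then u else v.

Lemma two_valued_solution n a C p u v t :
  p <= n -> 1 <= u <= C -> 1 <= v <= C -> 1 <= t <= C ->
  p * u + (n - p) * v = a * t -> is_solution a C (two_valued n p u v t).
Proof.
move=> le_pn hu hv ht eq_sum; split.
  by move=> i; rewrite /two_valued; case: ifP => _ //; case: ifP.
have lhs : \sum_(i < n.+1 | i.+1 < n.+1) two_valued n p u v t i = p * u + (n - p) * v.
  rewrite -(sum_two_values n p u v le_pn) big_mkcond big_ord_recr /= ltnn addn0.
  by apply: eq_bigr => i _; rewrite ltnS ltn_ord /two_valued /= ltn_eqF.
have rhs : \sum_(i < n.+1 | i.+1 == n.+1) two_valued n p u v t i = t.
  rewrite big_mkcond big_ord_recr /= eqxx big1 ?add0n /two_valued /= ?eqxx // => i _.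
  by rewrite eqSS ltn_eqF.
by rewrite lhs rhs.
Qed.

Lemma two_valued_monochromatic n p u v t (c : nat -> bool) :
  c u = c t -> c v = c t -> monochromatic c (two_valued n p u v t).
Proof.
move=> cu cv.
have same : forall i, c (two_valued n p u v t i) = c t.
  by move=> i; rewrite /two_valued; case: ifP => _ //; case: ifP.
by move=> i j; rewrite !same.
Qed.

Section ColouringOfC.
Variables (n a : nat) (c : nat -> bool).
Hypothesis a_ge3 : 3 <= a.
Hypothesis n_ge : a * a <= n.
Hypothesis no_mono : forall x : 'I_n.+1 -> nat,
  is_solution a (Cma n.+1 a) x -> ~ monochromatic c x.

Let C := Cma n.+1 a.

Let a_le_n : a <= n.
Proof. by apply: leq_trans n_ge; rewrite leq_pmulr //; lia. Qed.

Let a2a_lt_n : (a - 2) * a < n.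
Proof. by apply: leq_trans n_ge; rewrite ltn_mul2r; lia. Qed.

Lemma no_two_valued p u v t :
  p <= n -> 1 <= u <= C -> 1 <= v <= C -> 1 <= t <= C ->
  p * u + (n - p) * v = a * t -> c u = c t -> c v = c t -> False.
Proof.
move=> le_pn hu hv ht eq_sum cu cv.
apply: (no_mono (two_valued n p u v t)).
  exact: two_valued_solution.
exact: two_valued_monochromatic.
Qed.

Lemma window_in_range t : n * (a - 2) <= a * t <= n * (a - 1) -> 1 <= t <= C.
Proof.
case/andP=> lo hi; apply/andP; split; last first.
  by apply: Cma_upper => //; lia.
case: t lo {hi} => [|t] //; rewrite muln0 leqn0 muln_eq0; lia.
Qed.

Lemma small_in_range : 1 <= a - 2 <= C /\ 1 <= a - 1 <= C.
Proof.
have : a - 1 <= C by apply: Cma_upper => //; [lia | rewrite leq_mul2r a_le_n orbT].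
lia.
Qed.

Lemma window_other_colour t :
  c (a - 1) = c (a - 2) -> n * (a - 2) <= a * t <= n * (a - 1) ->
  c t != c (a - 2).
Proof.
move=> same_col /andP[lo hi]; apply/eqP => ct.
have [small2 small1] := small_in_range.
have a1 : a - 1 = (a - 2).+1 by lia.
set p := a * t - n * (a - 2).
have le_pn : p <= n by move: hi; rewrite a1 mulnS /p; lia.
apply: (@no_two_valued p (a - 1) (a - 2) t le_pn) => //.
- by apply: window_in_range; rewrite lo hi.
- by rewrite a1 weighted_sum_succ // /p subnK.
- by rewrite same_col ct.
Qed.

End ColouringOfC.

Theorem lemma5 (m a : nat) (c : nat -> bool) :
  3 <= a ->
  2 * a ^ 2 - a + 2 <= m ->
  (forall x : 'I_m -> nat, @is_solution m a (Cma m a) x -> ~ monochromatic c x) ->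
  c (a - 2) = true ->
  c (a - 1) = true ->
  c 1 = true.
Proof.
move=> ha; rewrite -mulnn; case: m => [|n] hm no_mono red2 red1; first by lia.
have hn : 2 * (a * a) - a + 1 <= n by lia.
have n_ge : a * a <= n.
  have : a <= a * a by rewrite leq_pmulr //; lia.
  lia.
have [d [t [et lo hi]]] := window_pair a n ha hn.
have lo' : n * (a - 2) <= a * (t + d) by rewrite (leq_trans lo) ?leq_mul2l ?leq_addr ?orbT.
have hi' : a * t <= n * (a - 1) by rewrite (leq_trans _ hi) ?leq_mul2l ?leq_addr ?orbT.
have blue x : n * (a - 2) <= a * x <= n * (a - 1) -> c x = false.
  move=> win; have := @window_other_colour n a c ha n_ge no_mono x.
  by rewrite red1 red2 eqb_id => /(_ erefl win) /negbTE.
have [t_range td_range] : 1 <= t <= Cma n.+1 a /\ 1 <= t + d <= Cma n.+1 a.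
  by split; apply: window_in_range => //; rewrite ?lo ?hi ?lo' ?hi'.
have [small2 _] := small_in_range n a ha n_ge.
case blue1: (c 1) => //; exfalso.
apply: (no_two_valued n a c no_mono (a - 1) t 1 (t + d)) => //.
- lia.
- by move: small2; lia.
- have : a * t = (a - 1) * t + t by rewrite -mulSnr; congr (_ * _); lia.
  rewrite muln1 mulnDr; lia.
- by rewrite !blue // ?lo ?hi ?lo' ?hi'.
- by rewrite blue1 blue // lo' hi.
Qed.
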